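(* For a happy sequent $G$, its model $\mathcal{M}(G)=\langle \mathrm{Lab}(G), \le_G, R_G, V\rangle$ is a birelational model in which $R_G$ is transitive and reflexive, and which has the following two properties: (i) if $x:A$ occurs on the left-hand side of $G$, then $x \Vdash A$ in $\mathcal{M}(G)$; (ii) if $x:A$ occurs on the right-hand side of $G$, then $x \not\Vdash A$ in $\mathcal{M}(G)$.
   Context: Formulas are built from atoms $a$ and $\bot$ by $\wedge,\vee,\supset,\Box,\Diamond$. A birelational model $\langle W,R,\le,V\rangle$ consists of a nonempty set $W$, a relation $R$, a preorder $\le$ on $W$ satisfying (F1) if $xRy$ and $y\le z$ then there is $u$ with $x\le u$ and $uRz$, and (F2) if $x\le z$ and $xRy$ then there is $u$ with $zRu$ and $y\le u$, and a valuation $V\colon W\to 2^{\mathrm{Atoms}}$ that is monotone along $\le$. Forcing: $w\Vdash a$ iff $a\in V(w)$; $w\not\Vdash\bot$; $\wedge,\vee$ pointwise; $w\Vdash A\supset B$ iff for all $w'\ge w$, $w'\Vdash A$ implies $w'\Vdash B$; $w\Vdash\Box A$ iff for all $w',u$ with $w\le w'$ and $w'Ru$, $u\Vdash A$; $w\Vdash\Diamond A$ iff there is $u$ with $wRu$ and $u\Vdash A$. A labelled sequent $G$ is $\mathcal{R},\Gamma\Longrightarrow\Delta$, where $\mathcal{R}$ is a set of relational atoms $x\le y$ and $xRy$ between labels, and $\Gamma,\Delta$ are multisets of labelled formulas $x:A$. Write $x\le_G y$ ($xR_Gy$) if that atom is in $\mathcal{R}$; write $x:A^\bullet$ if $x:A\in\Gamma$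 and $x:A^\circ$ if $x:A\in\Delta$; $\mathrm{Lab}(G)$ is the set of labels of $G$. A labelled formula is happy in $G$ as follows: $x:a^\bullet$ always; $x:a^\circ$ iff not $x:a^\bullet$; $x:\bot^\bullet$ never; $x:\bot^\circ$ always; $x:(A\wedge B)^\bullet$ iff $x:A^\bullet$ and $x:B^\bullet$; $x:(A\wedge B)^\circ$ iff $x:A^\circ$ or $x:B^\circ$; $x:(A\vee B)^\bullet$ iff $x:A^\bullet$ or $x:B^\bullet$; $x:(A\vee B)^\circ$ iff $x:A^\circ$ and $x:B^\circ$; $x:(A\supset B)^\bullet$ iff $x:A^\circ$ or $x:B^\bullet$; $x:(A\supset B)^\circ$ iff $y:A^\bullet$ and $y:B^\circ$ for some $y$ with $x\le_G y$; $x:(\Box A)^\bullet$ iff $z:A^\bullet$ and $z:(\Box A)^\bullet$ for all $z$ with $xR_Gz$; $x:(\Box A)^\circ$ iff $z:A^\circ$ for some $y,z$ with $x\le_G y$, $yR_Gz$; $x:(\Diamond A)^\bullet$ iff $y:A^\bullet$ for some $y$ with $xR_Gy$; $x:(\Diamond A)^\circ$ iff $y:A^\circ$ and $y:(\Diamond A)^\circ$ for all $y$ with $xR_Gy$. A label is happy iff all formulas occurring at it are happy. $G$ is structurally saturated iff: if $x\le_G y$ and $x:C^\bullet$ then $y:C^\bullet$; (F1) and (F2) hold for $R_G,\le_G$; $\le_G$ and $R_G$ are reflexive on all labels of $G$ and transitive. $G$ is happy iff it is structurally saturated and all its labels are happy. The model of $G$ is $\mathcal{M}(G)=\langle \mathrm{Lab}(G),\le_G,R_G,V\rangle$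 with $a\in V(w)$ iff $w:a^\bullet$ in $G$. *)

From Stdlib Require Import List.
Import ListNotations.

Inductive form : Type :=
| Atom : nat -> form
| Bot : form
| And : form -> form -> form
| Or : form -> form -> form
| Imp : form -> form -> form
| Box : form -> form
| Dia : form -> form.

Record model : Type := Model {
  world : Type;
  mR : world -> world -> Prop;
  mle : world -> world -> Prop;
  mV : world -> nat -> Prop
}.

Definition is_birelational (M : model) : Prop :=
  inhabited (world M) /\
  (forall x, mle M x x) /\
  (forall x y z, mle M x y -> mle M y z -> mle M x z) /\
  (forall x y z, mR M x y -> mle M y z -> exists u, mle M x u /\ mR M u z) /\
  (forall x y z, mle M x z -> mR M x y -> exists u, mR M z u /\ mle M y u) /\
  (forall x y a, mle M x y -> mV M x a -> mV M y a).

Fixpoint forces (M : model) (w : world M) (A : form) : Prop :=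
  match A with
  | Atom a => mV M w a
  | Bot => False
  | And B C => forces M w B /\ forces M w C
  | Or B C => forces M w B \/ forces M w C
  | Imp B C => forall w', mle M w w' -> forces M w' B -> forces M w' C
  | Box B => forall w' u, mle M w w' -> mR M w' u -> forces M u B
  | Dia B => exists u, mR M w u /\ forces M u B
  end.

Inductive relatom : Type :=
| LeAt : nat -> nat -> relatom
| RAt : nat -> nat -> relatom.

(* R, Gamma ==> Delta ; multisets represented as lists *)
Record sequent : Type := Sequent {
  rels : list relatom;
  lhs : list (nat * form);
  rhs : list (nat * form)
}.

Definition leG (G : sequent) (x y : nat) : Prop := In (LeAt x y) (rels G).
Definition RG (G : sequent) (x y : nat) : Prop := In (RAt x y) (rels G).
Definition inL (G : sequent) (x : nat) (A : form) : Prop := In (x, A) (lhs G).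
Definition inR (G : sequent) (x : nat) (A : form) : Prop := In (x, A) (rhs G).

Definition InLab (G : sequent) (x : nat) : Prop :=
  (exists y, leG G x y \/ leG G y x \/ RG G x y \/ RG G y x) \/
  (exists A, inL G x A \/ inR G x A).

Definition happyL (G : sequent) (x : nat) (A : form) : Prop :=
  match A with
  | Atom _ => True
  | Bot => False
  | And B C => inL G x B /\ inL G x C
  | Or B C => inL G x B \/ inL G x C
  | Imp B C => inR G x B \/ inL G x C
  | Box B => forall z, RG G x z -> inL G z B /\ inL G z (Box B)
  | Dia B => exists y, RG G x y /\ inL G y B
  end.

Definition happyR (G : sequent) (x : nat) (A : form) : Prop :=
  match A with
  | Atom a => ~ inL G x (Atom a)
  | Bot => True
  | And B C => inR G x B \/ inR G x C
  | Or B C => inR G x B /\ inR G x C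
  | Imp B C => exists y, leG G x y /\ inL G y B /\ inR G y C
  | Box B => exists y z, leG G x y /\ RG G y z /\ inR G z B
  | Dia B => forall y, RG G x y -> inR G y B /\ inR G y (Dia B)
  end.

Definition happy_label (G : sequent) (x : nat) : Prop :=
  (forall A, inL G x A -> happyL G x A) /\
  (forall A, inR G x A -> happyR G x A).

Definition struct_saturated (G : sequent) : Prop :=
  (forall x y C, leG G x y -> inL G x C -> inL G y C) /\
  (forall x y z, RG G x y -> leG G y z -> exists u, leG G x u /\ RG G u z) /\
  (forall x y z, leG G x z -> RG G x y -> exists u, RG G z u /\ leG G y u) /\
  (forall x, InLab G x -> leG G x x) /\
  (forall x, InLab G x -> RG G x x) /\
  (forall x y z, leG G x y -> leG G y z -> leG G x z) /\
  (forall x y z, RG G x y -> RG G y z -> RG G x z).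

Definition happy (G : sequent) : Prop :=
  struct_saturated G /\ (forall x, InLab G x -> happy_label G x).

Definition labT (G : sequent) : Type := { x : nat | InLab G x }.

Definition modelOf (G : sequent) : model :=
  {| world := labT G;
     mR := fun u v => RG G (proj1_sig u) (proj1_sig v);
     mle := fun u v => leG G (proj1_sig u) (proj1_sig v);
     mV := fun w a => inL G (proj1_sig w) (Atom a) |}.

(* The frame conditions of M(G) are literally the structural saturation
   conditions of G.  The truth lemma is a simultaneous induction on formulas:
   happiness of x:A places the immediate subformulas of A on the side that makes
   A forced (resp. refuted) at x.  The forcing clauses of implication and box
   quantify over all <=-successors y of x, and these are reached through the
   saturation condition that the left-hand side of G is closed upwards along
   <=_G, so that y:A is itself on the left and hence happy. *)

From Stdlib Require Import List.

Section HappyModel.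

Variable G : sequent.

Notation M := (modelOf G).

Lemma inL_InLab x A : inL G x A -> InLab G x.
Proof. intro H; right; exists A; auto. Qed.

Lemma inR_InLab x A : inR G x A -> InLab G x.
Proof. intro H; right; exists A; auto. Qed.

Lemma leG_InLab_r x y : leG G x y -> InLab G y.
Proof. intro H; left; exists x; auto. Qed.

Lemma RG_InLab_r x y : RG G x y -> InLab G y.
Proof. intro H; left; exists x; auto. Qed.

Definition truthful (A : form) : Prop :=
  forall w : world M,
    (inL G (proj1_sig w) A -> forces M w A) /\
    (inR G (proj1_sig w) A -> ~ forces M w A).

Lemma forces_of_truthful A (w : world M) :
  truthful A -> inL G (proj1_sig w) A -> forces M w A.
Proof. intro T; exact (proj1 (T w)). Qed.

Lemma not_forces_of_truthful A (w : world M) :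
  truthful A -> inR G (proj1_sig w) A -> ~ forces M w A.
Proof. intro T; exact (proj2 (T w)). Qed.

Section Saturated.

Hypothesis HG : struct_saturated G.

Lemma modelOf_birelational : (exists x, InLab G x) -> is_birelational M.
Proof.
  destruct HG as [Hmon [HF1 [HF2 [Hle_refl [_ [Hle_trans _]]]]]].
  intros [x0 Hx0].
  split; [|split; [|split; [|split; [|split]]]].
  - exact (inhabits (exist _ x0 Hx0)).
  - intros [x Hx]; simpl; auto.
  - intros [x ?] [y ?] [z ?]; simpl; eauto.
  - intros [x ?] [y ?] [z ?]; simpl; intros Hxy Hyz.
    destruct (HF1 _ _ _ Hxy Hyz) as [u [Hxu Huz]].
    exists (exist _ u (leG_InLab_r _ _ Hxu)); simpl; auto.
  - intros [x ?] [y ?] [z ?]; simpl; intros Hxz Hxy.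
    destruct (HF2 _ _ _ Hxz Hxy) as [u [Hzu Hyu]].
    exists (exist _ u (RG_InLab_r _ _ Hzu)); simpl; auto.
  - intros [x ?] [y ?] a; simpl; apply Hmon.
Qed.

Lemma modelOf_R_trans (u v w : world M) : mR M u v -> mR M v w -> mR M u w.
Proof.
  destruct HG as [_ [_ [_ [_ [_ [_ HR_trans]]]]]].
  destruct u, v, w; simpl; eauto.
Qed.

Lemma modelOf_R_refl (u : world M) : mR M u u.
Proof.
  destruct HG as [_ [_ [_ [_ [HR_refl _]]]]].
  destruct u; simpl; auto.
Qed.

End Saturated.

Section Truth.

Hypothesis inL_le_mono : forall x y C, leG G x y -> inL G x C -> inL G y C.
Hypothesis labels_happy : forall x, InLab G x -> happy_label G x.

Lemma inL_happy x A : inL G x A -> happyL G x A.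
Proof. intro H; exact (proj1 (labels_happy x (inL_InLab _ _ H)) A H). Qed.

Lemma inR_happy x A : inR G x A -> happyR G x A.
Proof. intro H; exact (proj2 (labels_happy x (inR_InLab _ _ H)) A H). Qed.

Lemma truthful_Atom a : truthful (Atom a).
Proof.
  intros [x Hx]; simpl; split; intro H; [exact H | exact (inR_happy _ _ H)].
Qed.

Lemma truthful_Bot : truthful Bot.
Proof. intros [x Hx]; simpl; split; [exact (inL_happy x Bot) | tauto]. Qed.

Lemma truthful_And B C : truthful B -> truthful C -> truthful (And B C).
Proof.
  intros TB TC w; split; intro H; simpl.
  - destruct (inL_happy _ _ H) as [HB HC].
    split; [exact (forces_of_truthful _ _ TB HB) | exact (forces_of_truthful _ _ TC HC)].
  - intros [FB FC]; destruct (inR_happy _ _ H) as [HB | HC].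
    + exact (not_forces_of_truthful _ _ TB HB FB).
    + exact (not_forces_of_truthful _ _ TC HC FC).
Qed.

Lemma truthful_Or B C : truthful B -> truthful C -> truthful (Or B C).
Proof.
  intros TB TC w; split; intro H; simpl.
  - destruct (inL_happy _ _ H) as [HB | HC]; [left | right].
    + exact (forces_of_truthful _ _ TB HB).
    + exact (forces_of_truthful _ _ TC HC).
  - destruct (inR_happy _ _ H) as [HB HC]; intros [FB | FC].
    + exact (not_forces_of_truthful _ _ TB HB FB).
    + exact (not_forces_of_truthful _ _ TC HC FC).
Qed.

Lemma truthful_Imp B C : truthful B -> truthful C -> truthful (Imp B C).
Proof.
  intros TB TC [x Hx]; split; intro H; simpl.
  - intros [y Hy] Hxy FB; simpl in Hxy.
    destruct (inL_happy y _ (inL_le_mono _ _ _ Hxy H)) as [HB | HC].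
    + exfalso; exact (not_forces_of_truthful _ (exist _ y Hy) TB HB FB).
    + exact (forces_of_truthful _ (exist _ y Hy) TC HC).
  - destruct (inR_happy _ _ H) as [y [Hxy [HB HC]]]; intro F.
    set (wy := exist _ y (leG_InLab_r _ _ Hxy) : world M).
    apply (not_forces_of_truthful _ wy TC HC), F; [exact Hxy|].
    exact (forces_of_truthful _ wy TB HB).
Qed.

Lemma truthful_Box B : truthful B -> truthful (Box B).
Proof.
  intros TB [x Hx]; split; intro H; simpl.
  - intros [y Hy] [z Hz] Hxy Hyz; simpl in Hxy, Hyz.
    destruct (inL_happy y _ (inL_le_mono _ _ _ Hxy H) z Hyz) as [HB _].
    exact (forces_of_truthful _ (exist _ z Hz) TB HB).
  - destruct (inR_happy _ _ H) as [y [z [Hxy [Hyz HB]]]]; intro F.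
    set (wz := exist _ z (RG_InLab_r _ _ Hyz) : world M).
    apply (not_forces_of_truthful _ wz TB HB).
    exact (F (exist _ y (leG_InLab_r _ _ Hxy)) wz Hxy Hyz).
Qed.

Lemma truthful_Dia B : truthful B -> truthful (Dia B).
Proof.
  intros TB [x Hx]; split; intro H; simpl.
  - destruct (inL_happy _ _ H) as [y [Hxy HB]].
    set (wy := exist _ y (RG_InLab_r _ _ Hxy) : world M).
    exists wy; split; [exact Hxy | exact (forces_of_truthful _ wy TB HB)].
  - intros [[y Hy] [Hxy FB]]; simpl in Hxy.
    destruct (inR_happy _ _ H y Hxy) as [HB _].
    exact (not_forces_of_truthful _ (exist _ y Hy) TB HB FB).
Qed.

Lemma truth_lemma A : truthful A.
Proof.
  induction A.
  - apply truthful_Atom.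
  - apply truthful_Bot.
  - now apply truthful_And.
  - now apply truthful_Or.
  - now apply truthful_Imp.
  - now apply truthful_Box.
  - now apply truthful_Dia.
Qed.

End Truth.

End HappyModel.

Theorem mainTheorem3 (G : sequent) (Hhappy : happy G)
  (Hne : exists x, InLab G x) :
  is_birelational (modelOf G) /\
  (forall u v w : world (modelOf G),
      mR (modelOf G) u v -> mR (modelOf G) v w -> mR (modelOf G) u w) /\
  (forall u : world (modelOf G), mR (modelOf G) u u) /\
  (forall (x : nat) (A : form) (Hx : InLab G x),
      inL G x A -> forces (modelOf G) (exist _ x Hx) A) /\
  (forall (x : nat) (A : form) (Hx : InLab G x),
      inR G x A -> ~ forces (modelOf G) (exist _ x Hx) A).
Proof.
  destruct Hhappy as [Hsat Hlabels].
  pose proof (truth_lemma G (proj1 Hsat) Hlabels) as Htruth.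
  split; [|split; [|split; [|split]]].
  - exact (modelOf_birelational G Hsat Hne).
  - exact (modelOf_R_trans G Hsat).
  - exact (modelOf_R_refl G Hsat).
  - intros x A Hx; exact (forces_of_truthful G A (exist _ x Hx) (Htruth A)).
  - intros x A Hx; exact (not_forces_of_truthful G A (exist _ x Hx) (Htruth A)).
Qed.
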